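(* Let $H_1$ and $H_2$ be vertex-disjoint connected graphs, each with at least two vertices, let $w\in V(H_1)$ and $v\in V(H_2)$, and let $k=\varepsilon_{H_1}(w)$. Let $l\geqslant 1$ be an integer with $k\geqslant l+1$. Let $G$ be the graph obtained from $H_1\cup H_2$ by adding the edge $wv$ and a path $vu_1u_2\ldots u_l$, where $u_1,\ldots,u_l$ are new vertices (so $wv$ is a cut edge of $G$ and $vu_1\ldots u_l$ is a pendant path at $v$). Let $$G'=G-\{vx: x\in N_{H_2}(v)\}+\{wx: x\in N_{H_2}(v)\}.$$ Then $\xi^{ee}(G)<\xi^{ee}(G')$.
   Context: All graphs are finite, simple and connected. For a vertex $x$ of a connected graph $G$, $\varepsilon_G(x)$ is the eccentricity of $x$ (the largest distance from $x$ to a vertex of $G$) and $d_G(x)$ its degree; $N_H(v)$ is the set of neighbours of $v$ in $H$. The total reciprocal edge-eccentricity of $G$ is $\xi^{ee}(G)=\sum_{uv\in E(G)}\left(\frac{1}{\varepsilon_G(u)}+\frac{1}{\varepsilon_G(v)}\right)=\sum_{x\in V(G)}\frac{d_G(x)}{\varepsilon_G(x)}$. *)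

From mathcomp Require Import all_boot all_order all_algebra.
Set Implicit Arguments. Unset Strict Implicit. Unset Printing Implicit Defensive.
Import Order.TTheory GRing.Theory Num.Theory.

Definition simple_graph (T : finType) (e : rel T) : Prop :=
  symmetric e /\ irreflexive e.
Definition connected_graph (T : finType) (e : rel T) : Prop :=
  forall x y, connect e x y.

Fixpoint ball (T : finType) (e : rel T) (n : nat) (x : T) : {set T} :=
  match n with
  | 0 => [set x]
  | n'.+1 => [set y | (y \in ball e n' x) || [exists z in ball e n' x, e z y]]
  end.

(* graph distance: least n with y in ball n x (= #|T| if unreachable,
   which never happens in a connected graph) *)
Definition dist (T : finType) (e : rel T) (x y : T) : nat :=
  find (fun n => y \in ball e n x) (iota 0 #|T|).

Definition ecc (T : finType) (e : rel T) (x : T) : nat :=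
  \max_(y : T) dist e x y.

Definition deg (T : finType) (e : rel T) (x : T) : nat := #|[set y | e x y]|.

Definition xi_ee (T : finType) (e : rel T) : rat :=
  (\sum_(x : T) (deg e x)%:R / (ecc e x)%:R)%R.

(* Vertex set of G: V(H1) + V(H2) + {u_1,...,u_l}, u_(i+1) represented by i : 'I_l *)
Definition GV (T1 T2 : finType) (l : nat) : finType := ((T1 + T2) + 'I_l)%type.

Definition G_edge (T1 T2 : finType) (e1 : rel T1) (e2 : rel T2) (w : T1) (v : T2)
  (l : nat) : rel (GV T1 T2 l) :=
  fun a b =>
  match a, b with
  | inl (inl x), inl (inl y) => e1 x y
  | inl (inr x), inl (inr y) => e2 x y
  | inl (inl x), inl (inr y) => (x == w) && (y == v)
  | inl (inr x), inl (inl y) => (x == v) && (y == w)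
  | inl (inr x), inr i => (x == v) && (nat_of_ord i == 0)
  | inr i, inl (inr x) => (x == v) && (nat_of_ord i == 0)
  | inr i, inr j => (nat_of_ord j == (nat_of_ord i).+1) || (nat_of_ord i == (nat_of_ord j).+1)
  | _, _ => false
  end.

Definition G'_edge (T1 T2 : finType) (e1 : rel T1) (e2 : rel T2) (w : T1) (v : T2)
  (l : nat) : rel (GV T1 T2 l) :=
  fun a b =>
  match a, b with
  | inl (inl x), inl (inl y) => e1 x y
  | inl (inr x), inl (inr y) => [&& e2 x y, x != v & y != v]
  | inl (inl x), inl (inr y) => (x == w) && ((y == v) || e2 v y)
  | inl (inr x), inl (inl y) => ((x == v) || e2 v x) && (y == w)
  | inl (inr x), inr i => (x == v) && (nat_of_ord i == 0)
  | inr i, inl (inr x) => (x == v) && (nat_of_ord i == 0)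
  | inr i, inr j => (nat_of_ord j == (nat_of_ord i).+1) || (nat_of_ord i == (nat_of_ord j).+1)
  | _, _ => false
  end.
Arguments G_edge {T1 T2} e1 e2 w v l.
Arguments G'_edge {T1 T2} e1 e2 w v l.

(* Compare the summands deg(x)/ecc(x) vertex by vertex.  Every path of G between H1 and H2
   uses the cut edge wv, which gives sharp lower bounds for eccentricities in G, whereas in G'
   all of H2 - v hangs off w.  Hence no vertex of H1 or H2 other than v loses (w even gains
   deg_H2(v) neighbours).  Let K = ecc_H1(w) and R = ecc_H2(v).  If R <= K the pendant
   vertices do not lose either, and w and v together gain strictly.  If R > K the pair w, v
   still does not lose; the pendant vertex u_(j+1) may lose, but it is compensated by the
   vertex at distance j+1 from w on a geodesic of H1 of length K, whose eccentricity drops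
   from at least j+R+2 to at most j+R+1 and whose degree is at least 2 >= deg u_(j+1).  Since
   l < K, the end of the geodesic is left over and gains strictly. *)

From mathcomp Require Import all_boot all_order all_algebra.
From mathcomp Require Import zify lra.
Import Order.TTheory GRing.Theory Num.Theory.
Set Implicit Arguments. Unset Strict Implicit. Unset Printing Implicit Defensive.

Section GraphDistance.

Variables (T : finType) (e : rel T).

Lemma ballS n x y :
  (y \in ball e n.+1 x) = (y \in ball e n x) || [exists z in ball e n x, e z y].
Proof. by rewrite /= inE. Qed.

Lemma ball0 x y : (y \in ball e 0 x) = (y == x).
Proof. by rewrite /= inE. Qed.

Lemma ball_succ n x y : y \in ball e n x -> y \in ball e n.+1 x.
Proof. by rewrite ballS => ->. Qed.

Lemma ball_center n x : x \in ball e n x.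
Proof. by elim: n => [|n IHn]; rewrite ?ball0 // ball_succ. Qed.

Lemma ball_edge n x y z : y \in ball e n x -> e y z -> z \in ball e n.+1 x.
Proof. by move=> hy hyz; rewrite ballS; apply/orP; right; apply/existsP; exists y; rewrite hy. Qed.

Lemma ball_trans n m x y z :
  y \in ball e n x -> z \in ball e m y -> z \in ball e (n + m) x.
Proof.
move=> hy; elim: m z => [|m IHm] z; first by rewrite ball0 addn0 => /eqP ->.
rewrite ballS addnS => /orP [/IHm/ball_succ //|/existsP [c /andP [hc hcz]]].
exact: ball_edge (IHm _ hc) hcz.
Qed.

Lemma ball_lipschitz (phi : T -> nat) n x y :
  (forall a b, e a b -> phi b <= (phi a).+1) -> y \in ball e n x -> phi y <= phi x + n.
Proof.
move=> phi_lip; elim: n y => [|n IHn] y; first by rewrite ball0 addn0 => /eqP ->.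
rewrite ballS => /orP [/IHn|/existsP [c /andP [/IHn hc /phi_lip hcy]]]; lia.
Qed.

Lemma ball_sym n x y : symmetric e -> y \in ball e n x -> x \in ball e n y.
Proof.
move=> e_sym; elim: n y => [|n IHn] y; first by rewrite !ball0 eq_sym.
rewrite ballS => /orP [/IHn/ball_succ //|/existsP [c /andP [/IHn hc hcy]]].
have yc : c \in ball e 1 y by rewrite (ball_edge (ball_center 0 y)) // e_sym.
by rewrite -add1n (ball_trans yc hc).
Qed.

Lemma deg_gt0 x y : e x y -> 0 < deg e x.
Proof. by move=> exy; apply/card_gt0P; exists y; rewrite inE. Qed.

Lemma deg_gt1 x y z : e x y -> e x z -> y != z -> 1 < deg e x.
Proof. by move=> exy exz yz; apply/card_gt1P; exists y, z; rewrite !inE. Qed.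

Lemma ball_connect n x y : y \in ball e n x -> connect e x y.
Proof.
elim: n y => [|n IHn] y; first by rewrite ball0 => /eqP ->.
rewrite ballS => /orP [/IHn //|/existsP [c /andP [/IHn hc hcy]]].
exact: connect_trans hc (connect1 hcy).
Qed.

Lemma connected_from_root r : symmetric e ->
  (forall z, exists n, z \in ball e n r) -> connected_graph e.
Proof.
move=> e_sym reach x y; have [n hx] := reach x; have [m hy] := reach y.
exact: connect_trans (ball_connect (ball_sym e_sym hx)) (ball_connect hy).
Qed.

Lemma path_ball x p : path e x p -> last x p \in ball e (size p) x.
Proof.
elim: p x => [|a p IHp] x /=; first by rewrite ball0.
case/andP => hxa /IHp hp.
by have := ball_trans (ball_edge (ball_center 0 x) hxa) hp; rewrite add1n.
Qed.

Lemma dist_le n x y : y \in ball e n x -> dist e x y <= n.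
Proof.
move=> hy; rewrite /dist; set P := fun k => y \in ball e k x.
rewrite leqNgt; apply/negP => lt_n.
have n_lt : n < #|T|.
  by have := find_size P (iota 0 #|T|); rewrite size_iota; lia.
by have := before_find 0 lt_n; rewrite nth_iota // add0n /P hy.
Qed.

Hypothesis e_conn : connected_graph e.

(* A duplicate-free walk has fewer than #|T| steps, so the search in [dist] reaches its length. *)
Lemma ball_dist x y : y \in ball e (dist e x y) x.
Proof.
case/connectP: (e_conn x y) => p hp ->; case/shortenP: hp => p' hp' uniq_p' _.
have lt_size : size p' < #|T|.
  move/card_uniqP: uniq_p' => /= card_p'.
  by have := max_card (mem (x :: p')); rewrite card_p' /=; lia.
have has_n : has (fun n => last x p' \in ball e n x) (iota 0 #|T|).
  by apply/hasP; exists (size p'); rewrite ?path_ball // mem_iota.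
have := nth_find 0 has_n; rewrite nth_iota ?add0n //.
by move: has_n; rewrite has_find size_iota.
Qed.

Lemma connected_deg_gt0 x y : x != y -> 0 < deg e x.
Proof.
move=> xy; case/connectP: (e_conn x y) => -[/= _ yx|z p /= /andP [exz _] _].
  by rewrite yx eqxx in xy.
exact: deg_gt0 exz.
Qed.

Lemma dist_lipschitz (phi : T -> nat) x y :
  (forall a b, e a b -> phi b <= (phi a).+1) -> phi y <= phi x + dist e x y.
Proof. by move=> phi_lip; apply: ball_lipschitz phi_lip (ball_dist x y). Qed.

Lemma distxx x : dist e x x = 0.
Proof. by apply/eqP; rewrite -leqn0 dist_le // ball_center. Qed.

Lemma dist_eq0 x y : (dist e x y == 0) = (x == y).
Proof.
apply/eqP/eqP => [d0|<-]; last exact: distxx.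
by have := ball_dist x y; rewrite d0 ball0 => /eqP.
Qed.

Lemma dist_triangle x y z : dist e x z <= dist e x y + dist e y z.
Proof. exact/dist_le/(ball_trans (ball_dist x y) (ball_dist y z)). Qed.

Lemma distC x y : symmetric e -> dist e x y = dist e y x.
Proof.
by move=> e_sym; apply/eqP; rewrite eqn_leq !dist_le ?(ball_sym e_sym (ball_dist _ _)).
Qed.

Lemma dist_edge x y z : e y z -> dist e x z <= (dist e x y).+1.
Proof. by move=> hyz; apply/dist_le/(ball_edge (ball_dist x y) hyz). Qed.

Lemma dist_pred x y n : dist e x y = n.+1 -> exists2 c, e c y & dist e x c = n.
Proof.
move=> dxy; have := ball_dist x y; rewrite dxy ballS.
case/orP => [/dist_le|/existsP [c /andP [/dist_le hc hcy]]]; first lia.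
by exists c => //; have := dist_edge x hcy; lia.
Qed.

Lemma geodesic x y : exists f : nat -> T,
  (forall j, j <= dist e x y -> dist e x (f j) = j) /\
  (forall j, j < dist e x y -> e (f j) (f j.+1)).
Proof.
suff: forall n y, dist e x y = n -> exists f : nat -> T, [/\ f n = y,
    forall j, j <= n -> dist e x (f j) = j & forall j, j < n -> e (f j) (f j.+1)].
  by move=> /(_ _ y erefl) [f [_ f_dist f_edge]]; exists f.
elim=> [|n IHn] {}y dxy.
  by exists (fun=> y); split=> // j; rewrite leqn0 => /eqP ->.
have [c hcy /IHn [f [f_n f_dist f_edge]]] := dist_pred dxy.
exists (fun j => if j == n.+1 then y else f j); split=> [|j hj|j hj].
- by rewrite eqxx.
- by case: eqP => [-> //|ne]; apply: f_dist; lia.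
- rewrite eqSS ifF; last by apply/eqP; lia.
  by case: eqP => [->|ne]; rewrite ?f_n ?f_edge //; lia.
Qed.

Lemma dist_le_ecc x y : dist e x y <= ecc e x.
Proof. exact: leq_bigmax. Qed.

Lemma ecc_le x n : (forall y, dist e x y <= n) -> ecc e x <= n.
Proof. by move=> hn; apply/bigmax_leqP => y _. Qed.

Lemma ecc_gt0 x y : x != y -> 0 < ecc e x.
Proof. by rewrite -dist_eq0 -lt0n => /leq_trans; apply; apply: dist_le_ecc. Qed.

Lemma ecc_attained x : exists y, dist e x y = ecc e x.
Proof.
have T_gt0 : 0 < #|T| by apply/card_gt0P; exists x.
by have [y hy] := bigop.eq_bigmax (fun y => dist e x y) T_gt0; exists y; rewrite /ecc hy.
Qed.

End GraphDistance.

Lemma ball_hom (T T' : finType) (e : rel T) (e' : rel T') (f : T -> T') n x y :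
  {homo f : a b / e a b >-> e' a b} -> y \in ball e n x -> f y \in ball e' n (f x).
Proof.
move=> f_hom; elim: n y => [|n IHn] y; first by rewrite !ball0 => /eqP ->.
rewrite ballS => /orP [/IHn/ball_succ //|/existsP [c /andP [/IHn hc /f_hom hcy]]].
exact: ball_edge hc hcy.
Qed.

Lemma deg_hom (T T' : finType) (e : rel T) (e' : rel T') (f : T -> T') x :
  injective f -> {homo f : a b / e a b >-> e' a b} -> deg e x <= deg e' (f x).
Proof.
move=> f_inj f_hom; rewrite /deg -(card_imset _ f_inj); apply/subset_leq_card/subsetP.
by move=> z /imsetP [y]; rewrite inE => /f_hom exy ->; rewrite inE.
Qed.

Section SumInjective.

Variable F : numDomainType.
Local Open Scope ring_scope.

Lemma ler_sum_inj (I J : finType) (h : I -> J) (P : pred J) (G : J -> F) :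
  injective h -> (forall i, P (h i)) -> (forall j, P j -> 0 <= G j) ->
  \sum_i G (h i) <= \sum_(j | P j) G j.
Proof.
move=> h_inj hP G_ge0.
have -> : \sum_i G (h i) = \sum_(j in h @: [set: I]) G j.
  by rewrite big_imset /=; [apply: eq_bigl => i; rewrite inE | move=> ? ? _ _ /h_inj].
rewrite big_mkcond [X in _ <= X]big_mkcond /=; apply: ler_sum => j _.
case: ifP => [/imsetP [i _ ->]|_]; first by rewrite hP.
by case: ifP => // /G_ge0.
Qed.

End SumInjective.

Definition ratio (T : finType) (e : rel T) (x : T) : rat := (deg e x)%:R / (ecc e x)%:R.

Section Ratios.

Variable F : realFieldType.
Local Open Scope ring_scope.

Lemma ler_ratio (n n' c d : nat) : (n <= n')%N -> (0 < c)%N -> (c <= d)%N ->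
  n%:R / d%:R <= n'%:R / c%:R :> F.
Proof.
move=> le_n c_gt0 le_cd; apply: (@le_trans _ _ (n'%:R / d%:R)).
  by rewrite ler_wpM2r ?invr_ge0 ?ler0n ?ler_nat.
rewrite ler_wpM2l ?ler0n // lef_pV2 ?posrE ?ltr0n ?ler_nat //.
exact: leq_trans le_cd.
Qed.

Lemma ltr_ratio (n c d : nat) : (0 < n)%N -> (0 < c)%N -> (c < d)%N ->
  n%:R / d%:R < n%:R / c%:R :> F.
Proof.
move=> n_gt0 c_gt0 lt_cd; rewrite ltr_pM2l ?ltr0n // ltf_pV2 ?posrE ?ltr0n ?ltr_nat //.
exact: ltn_trans lt_cd.
Qed.

Lemma ratio_exchange (p q m n : nat) : (q <= p)%N -> (0 < n)%N ->
  p%:R / n.+1%:R + (m + q)%:R / n%:R <= (p + m)%:R / n%:R + q%:R / n.+1%:R :> F.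
Proof.
move=> le_qp n_gt0.
have inv_lt : 0 <= n%:R^-1 - n.+1%:R^-1 :> F.
  by rewrite subr_ge0 lef_pV2 ?posrE ?ltr0n ?ler_nat.
have := ler_wpM2r inv_lt (etrans (ler_nat F q p) le_qp).
(* lra rejects inverses of non-constants, hence the two reciprocals are abstracted. *)
rewrite !natrD !mulrDl; move: (n%:R^-1) (n.+1%:R^-1) => a b; lra.
Qed.

Lemma ratio_shift (p q m n : nat) : (0 < m)%N -> (0 < n)%N ->
  p%:R / n%:R + (m + q)%:R / n.+1%:R < (p + m)%:R / n%:R + q%:R / n.+1%:R :> F.
Proof.
move=> m_gt0 n_gt0; have := ltr_ratio m_gt0 n_gt0 (ltnSn n).
rewrite !natrD !mulrDl; move: (n%:R^-1) (n.+1%:R^-1) => a b; lra.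
Qed.

End Ratios.

Section Construction.

Variables (T1 T2 : finType) (e1 : rel T1) (e2 : rel T2) (w : T1) (v : T2) (l : nat).
Hypotheses (e1_sym : symmetric e1) (e1_conn : connected_graph e1).
Hypotheses (e2_sym : symmetric e2) (e2_irr : irreflexive e2) (e2_conn : connected_graph e2).
Hypothesis T2_nontrivial : 1 < #|T2|.
Hypothesis l_gt0 : 0 < l.
Hypothesis l_lt_ecc : l < ecc e1 w.

Local Notation VG := (GV T1 T2 l).
Local Notation E := (G_edge e1 e2 w v l).
Local Notation E' := (G'_edge e1 e2 w v l).
Local Notation A a := (inl (inl a) : VG).
Local Notation B b := (inl (inr b) : VG).
Local Notation U i := (inr i : VG).
Local Notation W := (A w).
Local Notation V := (B v).
Local Notation d1 := (dist e1).
Local Notation d2 := (dist e2).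
Local Notation K := (ecc e1 w).
Local Notation R := (ecc e2 v).

Lemma G_sym : symmetric E.
Proof.
by move=> [[a|b]|i] [[a'|b']|i'] //=;
  first [exact: e1_sym | exact: e2_sym | exact: andbC | exact: orbC].
Qed.

Lemma G'_sym : symmetric E'.
Proof.
move=> [[a|b]|i] [[a'|b']|i'] //=; first [exact: e1_sym | exact: andbC | exact: orbC | idtac].
by rewrite e2_sym [(b != v) && _]andbC.
Qed.

Lemma pendant_path_ball (e : rel VG) :
  (forall i : 'I_l, i = 0 :> nat -> e V (U i)) ->
  (forall i j : 'I_l, j = i.+1 :> nat -> e (U i) (U j)) ->
  forall i : 'I_l, U i \in ball e i.+1 V.
Proof.
move=> e_first e_next [n lt_nl]; elim: n lt_nl => [|n IHn] lt_nl.
  exact: ball_edge (ball_center _ 0 V) (e_first _ _).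
have lt_n : n < l by lia.
exact: ball_edge (IHn lt_n) (e_next (Ordinal lt_n) _ _).
Qed.

Lemma U_ball (i : 'I_l) : U i \in ball E i.+1 V.
Proof. by apply: pendant_path_ball => [j /= ->|j j' /= ->]; rewrite ?eqxx. Qed.

Lemma U_ball' (i : 'I_l) : U i \in ball E' i.+1 V.
Proof. by apply: pendant_path_ball => [j /= ->|j j' /= ->]; rewrite ?eqxx. Qed.

Lemma V_ball : V \in ball E 1 W.
Proof. by apply: ball_edge (ball_center _ 0 W) _; rewrite /= !eqxx. Qed.

Lemma V_ball' : V \in ball E' 1 W.
Proof. by apply: ball_edge (ball_center _ 0 W) _; rewrite /= !eqxx. Qed.

Lemma A_hom : {homo (fun a => A a) : a a' / e1 a a' >-> E a a'}.
Proof. by []. Qed.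

Lemma A_hom' : {homo (fun a => A a) : a a' / e1 a a' >-> E' a a'}.
Proof. by []. Qed.

Lemma B_hom : {homo (fun b => B b) : b b' / e2 b b' >-> E b b'}.
Proof. by []. Qed.

Definition glue_v (b : T2) : VG := if b == v then W else B b.

Lemma glue_v_inj : injective glue_v.
Proof.
move=> b b'; rewrite /glue_v.
by case: eqP => [->|_]; case: eqP => [->|_] // [].
Qed.

Lemma glue_v_hom : {homo glue_v : b b' / e2 b b' >-> E' b b'}.
Proof.
move=> b b' hbb'; rewrite /glue_v.
case: eqP => [eb|/eqP nb]; case: eqP => [eb'|/eqP nb'] /=; subst.
- by rewrite e2_irr in hbb'.
- by rewrite eqxx hbb' orbT.
- by rewrite eqxx e2_sym hbb' orbT.
- by rewrite hbb' nb nb'.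
Qed.

Lemma G_conn : connected_graph E.
Proof.
apply: (connected_from_root (r := W) G_sym) => -[[a|b]|i].
- by exists (d1 w a); apply: (ball_hom A_hom); apply: ball_dist.
- exists (1 + d2 v b); apply: ball_trans V_ball _.
  by apply: (ball_hom B_hom); apply: ball_dist.
- by exists (1 + i.+1); apply: ball_trans V_ball (U_ball i).
Qed.

Definition walk'_W (z : VG) : nat :=
  match z with
  | inl (inl a) => d1 w a
  | inl (inr b) => if b == v then 1 else d2 v b
  | inr i => i.+2
  end.

Lemma ball_walk'_W z : z \in ball E' (walk'_W z) W.
Proof.
case: z => [[a|b]|i]; rewrite [walk'_W _]/=.
- by apply: (ball_hom A_hom'); apply: ball_dist.
- case: eqP => [->|/eqP nb]; first exact: V_ball'.
  by have := ball_hom glue_v_hom (ball_dist e2_conn v b); rewrite /glue_v eqxx (negbTE nb).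
- by rewrite -add1n; apply: ball_trans V_ball' (U_ball' i).
Qed.

Lemma G'_conn : connected_graph E'.
Proof.
by apply: (connected_from_root (r := W) G'_sym) => z; exists (walk'_W z); apply: ball_walk'_W.
Qed.

Lemma dist'_via_W x z : dist E' x z <= walk'_W x + walk'_W z.
Proof.
rewrite (leq_trans (dist_triangle G'_conn x W z)) // (distC G'_conn x W G'_sym).
by rewrite leq_add ?dist_le ?ball_walk'_W.
Qed.

Lemma dist'_A a a' : dist E' (A a) (A a') <= d1 a a'.
Proof. by apply/dist_le/(ball_hom A_hom')/ball_dist. Qed.

Lemma dist'_B b b' : b != v -> b' != v -> dist E' (B b) (B b') <= d2 b b'.
Proof.
move=> nb nb'; apply: dist_le; have := ball_hom glue_v_hom (ball_dist e2_conn b b').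
by rewrite /glue_v (negbTE nb) (negbTE nb').
Qed.

(* Distances in G, read off through the cut edge wv; only the lower bound [dist_lb_le] is
   needed, so the truncated [i - j] does no harm. *)
Definition dist_lb (x z : VG) : nat :=
  match x, z with
  | inl (inl a), inl (inl a') => d1 a a'
  | inl (inl a), inl (inr b) => d1 w a + 1 + d2 v b
  | inl (inl a), inr j => d1 w a + j.+2
  | inl (inr b), inl (inl a) => d2 v b + 1 + d1 w a
  | inl (inr b), inl (inr b') => d2 b b'
  | inl (inr b), inr j => d2 v b + j.+1
  | inr i, inl (inl a) => i.+2 + d1 w a
  | inr i, inl (inr b) => i.+1 + d2 v b
  | inr i, inr j => i - j
  end.

Lemma dist_lb_lipschitz x z z' : E z z' -> dist_lb x z' <= (dist_lb x z).+1.
Proof.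
case: x z z' => [[a|b]|i] [[y|y]|j] [[y'|y']|j'] //=;
  first [ move=> /andP [/eqP -> /eqP ->];
          rewrite ?distxx ?(distC e1_conn _ w e1_sym) ?(distC e2_conn _ v e2_sym); lia
        | move=> /orP [/eqP|/eqP]; lia
        | move=> edge; match goal with
            | edge : is_true (e1 _ ?t) |- context [dist e1 ?c ?t] => have := dist_edge e1_conn c edge
            | edge : is_true (e2 _ ?t) |- context [dist e2 ?c ?t] => have := dist_edge e2_conn c edge
            end; lia ].
Qed.

Lemma dist_lb_le x z : dist_lb x z <= dist E x z.
Proof.
have := dist_lipschitz G_conn x z (@dist_lb_lipschitz x).
by case: x => [[a|b]|i] /=; rewrite ?distxx ?subnn.
Qed.

Lemma dist_lb_le_ecc x z : dist_lb x z <= ecc E x.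
Proof. exact: leq_trans (dist_lb_le x z) (dist_le_ecc E x z). Qed.

Lemma ecc_w_gt0 : 0 < K.
Proof. exact: leq_ltn_trans (leq0n l) l_lt_ecc. Qed.

Lemma exists_neq_v : exists b, b != v.
Proof.
case/card_gt1P: T2_nontrivial => x [y [_ _ xy]].
by case: (eqVneq x v) => [xv|nx]; [exists y; rewrite -xv eq_sym | exists x].
Qed.

Lemma ecc_v_gt0 : 0 < R.
Proof. by have [b nb] := exists_neq_v; apply: (ecc_gt0 e2_conn (y := b)); rewrite eq_sym. Qed.

Lemma deg_v_gt0 : 0 < deg e2 v.
Proof. by have [b nb] := exists_neq_v; apply: (connected_deg_gt0 e2_conn (y := b)); rewrite eq_sym. Qed.

Lemma walk'_W_le z : walk'_W z <= maxn K R.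
Proof.
have := ecc_w_gt0; case: z => [[a|b]|i] /=.
- by have := dist_le_ecc e1 w a; lia.
- by case: eqP => _ //; have := dist_le_ecc e2 v b; lia.
- by have := ltn_ord i; lia.
Qed.

Lemma ecc'_le x : ecc E' x <= walk'_W x + maxn K R.
Proof. by apply: ecc_le => z; rewrite (leq_trans (dist'_via_W x z)) // leq_add2l walk'_W_le. Qed.

Lemma ecc'_gt0 x : 0 < ecc E' x.
Proof.
have [->|xW] := eqVneq x W; first by apply: (ecc_gt0 G'_conn (y := V)).
by apply: (ecc_gt0 G'_conn (y := W)).
Qed.

Lemma ecc'_A_le a : ecc E' (A a) <= ecc E (A a).
Proof.
apply: ecc_le => z; apply: leq_trans (dist_lb_le_ecc (A a) z).
case: z => [[a'|b]|i]; first exact: dist'_A.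
  apply: leq_trans (dist'_via_W _ _) _ => /=; case: eqP => _; lia.
by apply: leq_trans (dist'_via_W _ _) _ => /=; lia.
Qed.

Lemma ecc'_B_le b : b != v -> ecc E' (B b) <= ecc E (B b).
Proof.
move=> nb; have [a far] := ecc_attained e1 w.
have far_B := dist_lb_le_ecc (B b) (A a); rewrite /= far in far_B.
apply: ecc_le => -[[a'|b']|i].
- apply: leq_trans (dist_lb_le_ecc (B b) (A a')); apply: leq_trans (dist'_via_W _ _) _.
  by rewrite /= (negbTE nb); lia.
- have [->|nb'] := eqVneq b' v.
    by apply: leq_trans (dist'_via_W _ _) _; rewrite /= (negbTE nb) eqxx; lia.
  exact: leq_trans (dist'_B nb nb') (dist_lb_le_ecc (B b) (B b')).
- by apply: leq_trans (dist'_via_W _ _) _; rewrite /= (negbTE nb); have := ltn_ord i; lia.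
Qed.

Lemma ecc_W : maxn K R.+1 <= ecc E W.
Proof.
have [a far] := ecc_attained e1 w; have [b farb] := ecc_attained e2 v.
have := dist_lb_le_ecc W (A a); have := dist_lb_le_ecc W (B b).
by rewrite /= far farb distxx; lia.
Qed.

Lemma ecc_V : maxn K.+1 R <= ecc E V.
Proof.
have [a far] := ecc_attained e1 w; have [b farb] := ecc_attained e2 v.
have := dist_lb_le_ecc V (A a); have := dist_lb_le_ecc V (B b).
by rewrite /= far farb distxx; lia.
Qed.

Lemma ecc_U (i : 'I_l) : maxn (i.+2 + K) (i.+1 + R) <= ecc E (U i).
Proof.
have [a far] := ecc_attained e1 w; have [b farb] := ecc_attained e2 v.
have := dist_lb_le_ecc (U i) (A a); have := dist_lb_le_ecc (U i) (B b).
by rewrite /= far farb; lia.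
Qed.

Lemma ecc_A a : d1 w a + 1 + R <= ecc E (A a).
Proof. by have [b farb] := ecc_attained e2 v; have := dist_lb_le_ecc (A a) (B b); rewrite /= farb. Qed.

Lemma deg'_A a : a != w -> deg E' (A a) = deg E (A a).
Proof. by move=> na; apply: eq_card => -[[a'|b]|i]; rewrite !inE //= (negbTE na). Qed.

Lemma deg'_U (i : 'I_l) : deg E' (U i) = deg E (U i).
Proof. by apply: eq_card => -[[a|b]|j]; rewrite !inE. Qed.

Lemma deg_A a : deg e1 a <= deg E (A a).
Proof. by apply: deg_hom A_hom => a1 a2 []. Qed.

Lemma deg_U (i : 'I_l) : deg E (U i) <= 2.
Proof.
pose next : VG := U (insubd i i.+1).
pose prev : VG := if i == 0 :> nat then V else U (insubd i i.-1).
apply: leq_trans (_ : #|[set prev; next]| <= 2); last by rewrite cards2; case: (_ != _).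
apply/subset_leq_card/subsetP => -[[a|b]|j]; rewrite !inE //=.
  by case/andP => /eqP -> /eqP i0; rewrite /prev i0 !eqxx.
case/orP => /eqP ij; apply/orP; [right|left].
  by apply/eqP; congr inr; apply: val_inj; rewrite val_insubd -ij ltn_ord.
rewrite /prev ij /=; apply/eqP; congr inr; apply: val_inj.
by rewrite val_insubd /= ltn_ord.
Qed.

Lemma deg_B_le b : b != v -> deg E (B b) <= deg E' (B b).
Proof.
move=> nb; have := deg_hom b glue_v_inj glue_v_hom; rewrite /glue_v (negbTE nb).
apply: leq_trans; apply: leq_trans (leq_imset_card (fun b' => B b') [set b' | e2 b b']).
apply/subset_leq_card/subsetP => -[[a|b']|i]; rewrite !inE /= ?(negbTE nb) // => hbb'.
by apply/imsetP; exists b'; rewrite ?inE.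
Qed.

Lemma deg'_W : deg E W + deg e2 v <= deg E' W.
Proof.
rewrite /deg; set NW := [set y | E W y]; set Nv := (fun b => B b) @: [set b | e2 v b].
have card_Nv : #|Nv| = #|[set b | e2 v b]| by apply: card_imset => x y [].
have disj : NW :&: Nv = set0.
  apply/setP => z; rewrite !inE; apply/negP => /andP [hz /imsetP [b]].
  rewrite inE => hb hzb; subst z; move: hz => /= /andP [_ /eqP hbv]; subst b.
  by rewrite e2_irr in hb.
rewrite -card_Nv; have := cardsU NW Nv; rewrite disj cards0 subn0 => <-.
apply/subset_leq_card/subsetP => z; rewrite !inE => /orP [|/imsetP [b]].
- by case: z => [[a|b]|i] //= /andP [-> ->].
- by rewrite inE => hb ->; rewrite /= eqxx hb orbT.
Qed.

Lemma deg_V : deg E V <= deg e2 v + 2.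
Proof.
rewrite /deg; set Nv := (fun b => B b) @: [set b | e2 v b].
have card_Nv : #|Nv| = #|[set b | e2 v b]| by apply: card_imset => x y [].
apply: leq_trans (_ : #|Nv :|: [set W; U (Ordinal l_gt0)]| <= _).
  apply/subset_leq_card/subsetP => -[[a|b]|i]; rewrite !inE /=.
  - by move=> /andP [_ /eqP ->]; rewrite eqxx orbT.
  - by move=> hb; apply/orP; left; apply/imsetP; exists b; rewrite ?inE.
  - move=> /andP [_ /eqP i0]; apply/orP; right; apply/eqP; congr inr; exact: val_inj.
rewrite cardsU card_Nv cards2; case: (_ != _); lia.
Qed.

Lemma deg'_V : 1 < deg E' V.
Proof. by apply/card_gt1P; exists W, (U (Ordinal l_gt0)); rewrite !inE /= !eqxx. Qed.

Lemma deg_W : 1 < deg E W.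
Proof.
have [a far] := ecc_attained e1 w.
have : 0 < deg e1 w.
  apply: (connected_deg_gt0 e1_conn (y := a)).
  by rewrite -(dist_eq0 e1_conn) far -lt0n ecc_w_gt0.
case/card_gt0P => a1; rewrite inE => wa1.
by apply/card_gt1P; exists (A a1), V; rewrite !inE /= wa1 !eqxx.
Qed.

Local Open Scope ring_scope.

Definition gain (x : VG) : rat := ratio E' x - ratio E x.

Lemma xi_ee_gain : xi_ee E' - xi_ee E =
  \sum_a gain (A a) + \sum_b gain (B b) + \sum_i gain (U i).
Proof. by rewrite /xi_ee -sumrB !big_sumType. Qed.

Lemma gain_A_ge0 a : a != w -> 0 <= gain (A a).
Proof.
move=> na; rewrite subr_ge0; apply: ler_ratio (ecc'_gt0 _) (ecc'_A_le a).
by rewrite deg'_A.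
Qed.

Lemma gain_B_ge0 b : b != v -> 0 <= gain (B b).
Proof.
by move=> nb; rewrite subr_ge0; apply: ler_ratio (deg_B_le nb) (ecc'_gt0 _) (ecc'_B_le nb).
Qed.

Lemma gain_U_ge0 (i : 'I_l) : (R <= K)%N -> 0 <= gain (U i).
Proof.
move=> RK; have ecc_le_U : (ecc E' (U i) <= ecc E (U i))%N.
  by have := ecc'_le (U i); have := ecc_U i; rewrite [walk'_W _]/=; lia.
by rewrite subr_ge0; apply: ler_ratio (ecc'_gt0 _) ecc_le_U; rewrite deg'_U.
Qed.

Lemma gain_WV_gt0 : (R <= K)%N -> 0 < gain W + gain V.
Proof.
move=> RK; rewrite addrACA -opprD subr_gt0.
have := ecc_W; have := ecc_V; have := ecc'_le W; have := ecc'_le V.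
rewrite [walk'_W V]/= [walk'_W W]/= eqxx distxx => e'V e'W eV eW.
have rW : ratio E W <= (deg E W)%:R / K%:R by apply: ler_ratio; lia.
have rV : ratio E V <= (deg e2 v + 2)%:R / K.+1%:R by apply: ler_ratio deg_V _ _; lia.
have r'W : (deg E W + deg e2 v)%:R / K%:R <= ratio E' W.
  by apply: ler_ratio deg'_W (ecc'_gt0 W) _; lia.
have r'V : 2%:R / K.+1%:R <= ratio E' V by apply: ler_ratio deg'_V (ecc'_gt0 V) _; lia.
apply: le_lt_trans (lerD rW rV) (lt_le_trans _ (lerD r'W r'V)).
by apply: ratio_shift; [exact: deg_v_gt0 | exact: ecc_w_gt0].
Qed.

Lemma gain_WV_ge0 : (K < R)%N -> 0 <= gain W + gain V.
Proof.
move=> KR; rewrite addrACA -opprD subr_ge0.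
have := ecc_W; have := ecc_V; have := ecc'_le W; have := ecc'_le V.
rewrite [walk'_W V]/= [walk'_W W]/= eqxx distxx => e'V e'W eV eW.
have rW : ratio E W <= (deg E W)%:R / R.+1%:R by apply: ler_ratio; lia.
have rV : ratio E V <= (deg e2 v + 2)%:R / R%:R.
  by apply: ler_ratio deg_V ecc_v_gt0 _; lia.
have r'W : (deg E W + deg e2 v)%:R / R%:R <= ratio E' W.
  by apply: ler_ratio deg'_W (ecc'_gt0 W) _; lia.
have r'V : 2%:R / R.+1%:R <= ratio E' V by apply: ler_ratio deg'_V (ecc'_gt0 V) _; lia.
apply: le_trans (lerD rW rV) (le_trans _ (lerD r'W r'V)).
by apply: ratio_exchange; [exact: deg_W | exact: ecc_v_gt0].
Qed.

Lemma gain_AU_ge0 (i : 'I_l) y : (K < R)%N -> d1 w y = i.+1 -> (1 < deg e1 y)%N ->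
  0 <= gain (A y) + gain (U i).
Proof.
move=> KR dy deg_y; rewrite addrACA -opprD subr_ge0.
have yw : y != w by rewrite eq_sym -(dist_eq0 e1_conn) dy.
have := ecc_A y; have := ecc_U i; have := ecc'_le (A y); have := ecc'_le (U i).
rewrite [walk'_W (U i)]/= [walk'_W (A y)]/= dy => e'U e'A eU eA.
have deg_UA : (deg E (U i) <= deg E (A y))%N.
  exact: leq_trans (deg_U i) (leq_trans deg_y (deg_A y)).
pose n := (i.+1 + R)%N.
have rA : ratio E (A y) <= (deg E (A y))%:R / n.+1%:R by apply: ler_ratio; lia.
have rU : ratio E (U i) <= (deg E (U i))%:R / n%:R by apply: ler_ratio; lia.
have r'A : (deg E (A y))%:R / n%:R <= ratio E' (A y).
  by apply: ler_ratio (ecc'_gt0 _) _; [rewrite deg'_A | lia].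
have r'U : (deg E (U i))%:R / n.+1%:R <= ratio E' (U i).
  by apply: ler_ratio (ecc'_gt0 _) _; [rewrite deg'_U | lia].
apply: le_trans (lerD rA rU) (le_trans _ (lerD r'A r'U)).
by have := @ratio_exchange rat _ _ 0 n deg_UA isT; rewrite add0n addn0.
Qed.

Lemma gain_A_far_gt0 y : (K < R)%N -> d1 w y = K -> (0 < deg e1 y)%N -> 0 < gain (A y).
Proof.
move=> KR dy deg_y; rewrite subr_gt0.
have yw : y != w by rewrite eq_sym -(dist_eq0 e1_conn) dy -lt0n ecc_w_gt0.
have := ecc_A y; have := ecc'_le (A y); rewrite [walk'_W _]/= dy => e'A eA.
have rA : ratio E (A y) <= (deg E (A y))%:R / (K + R).+1%:R by apply: ler_ratio; lia.
have r'A : (deg E (A y))%:R / (K + R)%:R <= ratio E' (A y).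
  by apply: ler_ratio (ecc'_gt0 _) _; [rewrite deg'_A | lia].
apply: le_lt_trans rA (lt_le_trans _ r'A); apply: ltr_ratio => //.
  exact: leq_trans deg_y (deg_A y).
by rewrite addn_gt0 ecc_w_gt0.
Qed.

Lemma gain_H1_path_gt0 : (K < R)%N ->
  0 < \sum_(a | a != w) gain (A a) + \sum_i gain (U i).
Proof.
move=> KR; have [a far] := ecc_attained e1 w.
have [f [f_dist f_edge]] := geodesic e1_conn w a; rewrite far in f_dist f_edge.
have f_nw j : (j < K)%N -> f j.+1 != w.
  by move=> lt_jK; rewrite eq_sym -(dist_eq0 e1_conn) f_dist.
have f_inj : injective (fun j : 'I_K => f j.+1).
  by move=> j j' /(congr1 (d1 w)); rewrite !f_dist // => -[] /val_inj.
have deg_f j : (j.+1 < K)%N -> (1 < deg e1 (f j.+1))%N.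
  move=> lt_jK; apply: (@deg_gt1 _ _ _ (f j) (f j.+2)).
  - by rewrite e1_sym f_edge //; lia.
  - exact: f_edge.
  - by apply/eqP => /(congr1 (d1 w)); rewrite !f_dist; lia.
pose g j := gain (A (f j.+1)).
have sum_A : \sum_(j < K) g j <= \sum_(a | a != w) gain (A a).
  apply: (ler_sum_inj (G := fun a => gain (A a)) f_inj) => [j|]; first exact: f_nw.
  by move=> b; apply: gain_A_ge0.
have split_K : \sum_(j < K) g j = \sum_(i < l) g i + \sum_(j < K | ~~ (j < l)%N) g j.
  by rewrite (bigID (fun j : 'I_K => (j < l)%N)) /= -big_ord_widen // ltnW.
have pairs : 0 <= \sum_(i < l) (g i + gain (U i)).
  apply: sumr_ge0 => i _; have := ltn_ord i => lt_il.
  by apply: gain_AU_ge0 => //; [apply: f_dist | apply: deg_f]; lia.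
have lt_K1 : (K.-1 < K)%N by rewrite prednK ?ecc_w_gt0.
have g_last : 0 < g K.-1.
  have := f_edge K.-1; rewrite /g prednK ?ecc_w_gt0 // => /(_ (leqnn K)) edge_K.
  apply: gain_A_far_gt0 => //; first exact: f_dist.
  by apply: (@deg_gt0 _ _ _ (f K.-1)); rewrite e1_sym.
have far_part : 0 < \sum_(j < K | ~~ (j < l)%N) g j.
  rewrite (bigD1 (Ordinal lt_K1)) /=; last by rewrite -leqNgt; lia.
  have rest : 0 <= \sum_(j < K | ~~ (j < l)%N && (j != Ordinal lt_K1)) g j.
    by apply: sumr_ge0 => j _; apply: gain_A_ge0; apply: f_nw.
  lra.
rewrite big_split /= in pairs; lra.
Qed.

Lemma xi_ee_G_lt_G' : xi_ee E < xi_ee E'.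
Proof.
rewrite -subr_gt0 xi_ee_gain (bigD1 w) //= (bigD1 v) //=.
have gA : 0 <= \sum_(a | a != w) gain (A a) by apply: sumr_ge0 => a; apply: gain_A_ge0.
have gB : 0 <= \sum_(b | b != v) gain (B b) by apply: sumr_ge0 => b; apply: gain_B_ge0.
case: (leqP R K) => [RK|KR].
  have gU : 0 <= \sum_i gain (U i) by apply: sumr_ge0 => i _; apply: gain_U_ge0.
  by have := gain_WV_gt0 RK; lra.
by have := gain_WV_ge0 KR; have := gain_H1_path_gt0 KR; lra.
Qed.

End Construction.

Theorem theorem3p1 (T1 T2 : finType) (e1 : rel T1) (e2 : rel T2)
  (w : T1) (v : T2) (k l : nat) :
  simple_graph e1 -> connected_graph e1 -> 2 <= #|T1| ->
  simple_graph e2 -> connected_graph e2 -> 2 <= #|T2| ->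
  k = ecc e1 w -> 1 <= l -> l.+1 <= k ->
  (xi_ee (G_edge e1 e2 w v l) < xi_ee (G'_edge e1 e2 w v l))%R.
Proof.
move=> [e1_sym _] e1_conn _ [e2_sym e2_irr] e2_conn T2_nontrivial -> l_gt0 l_lt_ecc.
exact: xi_ee_G_lt_G'.
Qed.
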